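(* Let $G$ be a graph without isolated vertices and $T$ a solution counting decision tree for $\varphi(G)$. Let $u$ be a node of $T$ labelled by a variable $x$ that is not forced to $1$ by $A_u$, and let $vp$ and $vn$ be the heads of the outgoing edges of $u$ labelled $x$ and $\neg x$ respectively. Let $S\subseteq V(G)$ contain a neighbour $y$ of $x$, and let $p$ be the weight of the edge $(u,vp)$. Then $p\,\alpha^{vp}(S)+(1-p)\,\alpha^{vn}(S\setminus\{y\})\leq\alpha^u(S)$.
   Context: $\varphi(G)$ is the CNF on variables $V(G)$ with clauses $(u\vee v)$ for $\{u,v\}\in E(G)$. Boolean functions are identified with their sets of satisfying assignments (sets of literals); $F|_S$ is the function on the remaining variables whose satisfying assignments are the $S'$ with $S\cup S'$ satisfying $F$; $|\cdot|$ counts satisfying assignments. Decision tree for $F$ (not constant false): root labelled by some $x\in Var(F)$; for each literal $\ell\in\{x,\neg x\}$ occurring in some satisfying assignment, an outgoing edge labelled $\ell$ whose head is a leaf if $|Var(F)|=1$ and otherwise the root of a decision tree for $F|_\ell$. A solution counting decision tree additionally gives the edge leaving node $w$ with label $\ell$ the weight $|F|_{A_w\cup\{\ell\}}|/|F|_{A_w}|$, where $A_w$ is the set of literals labelling the root-$w$ path. A variable $z$ is forced to $1$ by $A_w$ if some neighbour $z'$ of $z$ in $G$ has $\neg z'\in A_w$. $N^w(z)$ is the set of neighbours of $z$ that do not occur in $A_w$ and are not forced to $1$ by $A_w$. For $d\geq 0$, $c_d=1-2^{-(2d+1)}$, and $\alpha^w(S)=\prod_{z\in S}c_{|N^w(z)|}$.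 *)

From mathcomp Require Import all_boot all_order all_algebra.
Set Implicit Arguments. Unset Strict Implicit. Unset Printing Implicit Defensive.
Import Order.TTheory GRing.Theory Num.Theory.
Local Open Scope ring_scope.

Section Defs.
Variable V : finType.

Definition simple_graph (e : rel V) : Prop :=
  symmetric e /\ irreflexive e.

Definition no_isolated (e : rel V) : Prop := forall v : V, exists w, e v w.

Definition phi (e : rel V) (a : {ffun V -> bool}) : bool :=
  [forall u, forall v, e u v ==> (a u || a v)].

(* A set of literals on distinct variables = a partial assignment:
   A v = Some true  <-> literal v in A,
   A v = Some false <-> literal (~ v) in A,
   A v = None       <-> v does not occur in A. *)
Definition pasg := V -> option bool.

Definition pempty : pasg := fun _ => None.

(* A u {l} where l is the literal x (b = true) or ~x (b = false). *)
Definition padd (A : pasg) (x : V) (b : bool) : pasg :=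
  fun v => if v == x then Some b else A v.

Definition extends (A : pasg) (a : {ffun V -> bool}) : bool :=
  [forall v, if A v is Some b then a v == b else true].

(* |phi(G)|_A| : satisfying assignments S' of the remaining variables with
   A u S' satisfying phi(G), i.e. total extensions of A satisfying phi(G). *)
Definition nsol (e : rel V) (A : pasg) : nat :=
  #|[set a : {ffun V -> bool} | phi e a && extends A a]|.

Definition nvars (A : pasg) : nat := #|[set v | A v == None]|.

(* Decision trees: a leaf, or a node labelled by a variable with an optional
   outgoing edge labelled x (first) and an optional edge labelled ~x. *)
Inductive dtree := DLeaf | DNode of V & option dtree & option dtree.

Fixpoint dtree_for (e : rel V) (A : pasg) (t : dtree) {struct t} : Prop :=
  match t with
  | DLeaf => False
  | DNode x tp tn =>
      [/\ 0 < nsol e A, A x = None,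
          (match tp with
           | None => nsol e (padd A x true) = 0%N
           | Some c => 0 < nsol e (padd A x true) /\
                       (if nvars A == 1%N then c = DLeaf
                        else dtree_for e (padd A x true) c)
           end) &
          (match tn with
           | None => nsol e (padd A x false) = 0%N
           | Some c => 0 < nsol e (padd A x false) /\
                       (if nvars A == 1%N then c = DLeaf
                        else dtree_for e (padd A x false) c)
           end)]
  end%N.

(* Nodes of a tree are addressed by the sequence of edge labels from the root
   (true = positive literal edge, false = negative literal edge).
   [node_at A t p] = Some (A_w, subtree rooted at w). *)
Fixpoint node_at (A : pasg) (t : dtree) (p : seq bool) : option (pasg * dtree) :=
  match p with
  | [::] => Some (A, t)
  | b :: p' =>
      match t with
      | DLeaf => None
      | DNode x tp tn =>
          match (if b then tp else tn) with
          | None => None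
          | Some c => node_at (padd A x b) c p'
          end
      end
  end.

Definition weight (R : fieldType) (e : rel V) (A : pasg) (x : V) (b : bool) : R :=
  (nsol e (padd A x b))%:R / (nsol e A)%:R.

Definition forced (e : rel V) (A : pasg) (z : V) : bool :=
  [exists z', e z z' && (A z' == Some false)].

Definition Nw (e : rel V) (A : pasg) (z : V) : {set V} :=
  [set z' | e z z' && (A z' == None) && ~~ forced e A z'].

Definition cd (R : fieldType) (d : nat) : R := 1 - ((2 ^ (2 * d + 1))%N%:R)^-1.

Definition alpha (R : fieldType) (e : rel V) (A : pasg) (S : {set V}) : R :=
  \prod_(z in S) cd R #|Nw e A z|.

End Defs.

From mathcomp Require Import all_boot all_order all_algebra.
From mathcomp Require Import lra.
Set Implicit Arguments. Unset Strict Implicit.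
Import Order.TTheory GRing.Theory Num.Theory.
Local Open Scope ring_scope.

(* Let [d.+1 = |N^u(y)|].  The unforced neighbour [x] of [y] belongs to
   [N^u(y)] but not to [N^vp(y)], so the factor of [y] drops from [c_(d+1)]
   to at most [c_d] at [vp]; it is absent at [vn], and every other factor can
   only decrease down the tree because [N^w(z)] shrinks.  Flipping
   [x] to true injects the solutions of [phi(G)|_(A_u, not x)] into those of
   [phi(G)|_(A_u, x)] ([phi(G)] is monotone), so [p >= 1/2].  Hence the left
   side is at most [(1 - p (1 - c_d)) alpha^u(S \ y)], and
   [1 - (1 - c_d) / 2 <= 1 - (1 - c_d) / 4 = c_(d+1)]. *)

Section Weights.
Variable R : realFieldType.

Lemma cd_ge0 d : 0 <= cd R d.
Proof.
by rewrite subr_ge0 invf_le1 ?ltr0n ?expn_gt0 // ler1n expn_gt0.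
Qed.

Lemma cd_le1 d : cd R d <= 1.
Proof. by rewrite lerBlDr lerDl invr_ge0 ler0n. Qed.

Lemma cd_homo d1 d2 : (d1 <= d2)%N -> cd R d1 <= cd R d2.
Proof.
move=> le_d; rewrite lerB // lef_pV2 ?posrE ?ltr0n ?expn_gt0 // ler_nat.
by rewrite leq_pexp2l // leq_add2r leq_mul2l le_d orbT.
Qed.

Lemma cdS d : cd R d.+1 = 1 - (1 - cd R d) / 4.
Proof.
rewrite {2}/cd subKr; congr (_ - _).
have -> : (2 * d.+1 + 1 = (2 * d + 1).+2)%N by rewrite mulnS -addnA addnC addn2.
by rewrite !expnS mulnA natrM invfM mulrC.
Qed.

Lemma cd_mix_le d p c X Y a :
    1 / 2 <= p <= 1 -> 0 <= c <= cd R d -> 0 <= X <= a -> 0 <= Y <= a ->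
  p * (c * X) + (1 - p) * Y <= cd R d.+1 * a.
Proof.
move=> /andP[p_ge p_le1] /andP[c_ge0 c_le] /andP[X_ge0 X_le] /andP[Y_ge0 Y_le].
have cd_le1d := cd_le1 d; rewrite cdS.
have a_ge0 : 0 <= a by apply: le_trans X_le.
have drop_ge0 : 0 <= (1 - cd R d) * a by apply: mulr_ge0; lra.
have pcX_le : p * (c * X) <= p * (cd R d * a) by apply/ler_wpM2l/ler_pM; lra.
have pY_le : (1 - p) * Y <= (1 - p) * a by apply: ler_wpM2l; lra.
have pu_ge : 1 / 2 * ((1 - cd R d) * a) <= p * ((1 - cd R d) * a) by apply: ler_wpM2r.
lra.
Qed.

End Weights.

Section Trees.
Variable V : finType.
Implicit Types (A : pasg V) (t : dtree V).

Lemma node_at_cat A t p q :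
  node_at A t (p ++ q) =
  if node_at A t p is Some (B, t') then node_at B t' q else None.
Proof.
elim: p A t => [|b p IHp] A [|x tp tn] //=.
by case: (if b then tp else tn).
Qed.

Lemma node_at_rcons A t p b B x tp tn B' t' :
    node_at A t p = Some (B, DNode x tp tn) ->
    node_at A t (rcons p b) = Some (B', t') ->
  B' = padd B x b.
Proof.
rewrite -cats1 node_at_cat => -> /=.
by case: b; [case: tp | case: tn] => // -[|? ? ?] [<-].
Qed.

Lemma node_at_dtree_for e A t p B x tp tn :
    dtree_for e A t -> node_at A t p = Some (B, DNode x tp tn) ->
  dtree_for e B (DNode x tp tn).
Proof.
elim: p A t => [|b p IHp] A [|x' tp' tn'] //=; first by move=> ? [<- <- <- <-].
move=> [_ _ for_tp for_tn].
have for_child c : (if b then tp' else tn') = Some c ->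
    if nvars A == 1%N then c = DLeaf V else dtree_for e (padd A x' b) c.
  by case: b => E; [move: for_tp | move: for_tn]; rewrite E => -[].
case: (if b then tp' else tn') for_child => [c /(_ c erefl)|] //.
by case: (nvars A == 1%N) => [->|/IHp//]; case: p {IHp}.
Qed.

End Trees.

Section Counting.
Variables (V : finType) (e : rel V).
Implicit Types (A : pasg V) (a : {ffun V -> bool}).

Lemma extends_padd A x b a : A x = None ->
  extends (padd A x b) a = (a x == b) && extends A a.
Proof.
move=> Ax; apply/forallP/andP => [ext_xb | [/eqP ax /forallP ext] v].
  split; first by have := ext_xb x; rewrite /padd eqxx.
  by apply/forallP => v; have := ext_xb v; rewrite /padd; case: eqP => [->|]; rewrite ?Ax.
by rewrite /padd; case: eqP => [->|_]; rewrite ?ax ?ext.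
Qed.

Lemma nsol_padd_split A x : A x = None ->
  nsol e A = (nsol e (padd A x true) + nsol e (padd A x false))%N.
Proof.
move=> Ax; rewrite /nsol -(cardID [set a : {ffun V -> bool} | a x]).
by congr (_ + _)%N; apply: eq_card => a;
  rewrite !inE !extends_padd //; case: (a x); rewrite ?andbT ?andbF.
Qed.

Lemma phi_mono a a' : phi e a -> (forall v, a v ==> a' v) -> phi e a'.
Proof.
move=> /forallP phi_a le_a; apply/forallP => u; apply/forallP => v.
apply/implyP => euv; have /forallP/(_ v)/implyP/(_ euv)/orP[au|av] := phi_a u.
  by rewrite (implyP (le_a u) au).
by rewrite (implyP (le_a v) av) orbT.
Qed.

Lemma nsol_padd_false_le A x : A x = None ->
  (nsol e (padd A x false) <= nsol e (padd A x true))%N.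
Proof.
move=> Ax; set f := fun a : {ffun V -> bool} => [ffun v => (v == x) || a v].
rewrite /nsol -(card_in_imset (f := f)); last first.
  move=> a1 a2; rewrite !inE !extends_padd // => /andP[_ /andP[/eqP a1x _]].
  move=> /andP[_ /andP[/eqP a2x _]] /ffunP f12; apply/ffunP => v.
  by have := f12 v; rewrite !ffunE; case: eqP => [-> _|_ //]; rewrite a1x a2x.
apply/subset_leq_card/subsetP => _ /imsetP[a + ->]; rewrite !inE !extends_padd //.
move=> /andP[phi_a /andP[_ ext_a]]; rewrite ffunE eqxx /=.
apply/andP; split.
  by apply: (phi_mono phi_a) => v; rewrite /f ffunE; case: (a v); rewrite ?orbT.
apply/forallP => v; have /forallP/(_ v) := ext_a.
by rewrite ffunE; case: eqP => [->|_]; rewrite ?Ax.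
Qed.

Lemma weight_true_ge_half (R : realFieldType) A x :
  A x = None -> (0 < nsol e A)%N -> 1 / 2 <= weight R e A x true <= 1.
Proof.
move=> Ax; rewrite /weight (nsol_padd_split Ax).
have := nsol_padd_false_le Ax; rewrite -(ler_nat R).
move: (nsol e _) (nsol e _) => nT nF nF_le nTF_gt0.
have nTF_pos : (0 : R) < (nT + nF)%N%:R by rewrite ltr0n.
rewrite natrD in nTF_pos *; have := ler0n R nF.
by rewrite ler_pdivlMr // ler_pdivrMr // mul1r => ?; apply/andP; split; lra.
Qed.

End Counting.

Section Alpha.
Variables (V : finType) (e : rel V).
Implicit Types (A : pasg V) (S : {set V}).

Lemma forced_padd A x b z : A x = None -> forced e A z -> forced e (padd A x b) z.
Proof.
move=> Ax /existsP[z' /andP[ezz' Az']]; apply/existsP; exists z'.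
rewrite ezz' /padd; case: (z' =P x) => [E|_ //].
by rewrite E Ax in Az'.
Qed.

Lemma Nw_padd_subset A x b z : A x = None -> Nw e (padd A x b) z \subset Nw e A z.
Proof.
move=> Ax; apply/subsetP => z'; rewrite !inE => /andP[/andP[-> Az'] not_forced].
rewrite (contra (forced_padd b Ax)) // andbT.
by move: Az'; rewrite /padd; case: (z' =P x).
Qed.

Lemma Nw_padd_proper A x b y :
    e y x -> A x = None -> ~~ forced e A x ->
  Nw e (padd A x b) y \proper Nw e A y.
Proof.
move=> eyx Ax not_forced; apply/properP; split; first exact: Nw_padd_subset.
by exists x; rewrite !inE /padd ?eqxx /= ?andbF ?eyx ?Ax ?not_forced.
Qed.

Variable R : realFieldType.

Lemma alpha_ge0 A S : 0 <= alpha R e A S.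
Proof. by apply: prodr_ge0 => z _; apply: cd_ge0. Qed.

Lemma alpha_padd_le A x b S : A x = None -> alpha R e (padd A x b) S <= alpha R e A S.
Proof.
move=> Ax; apply: ler_prod => z _; rewrite cd_ge0 cd_homo //.
exact/subset_leq_card/Nw_padd_subset.
Qed.

Lemma alpha_setD1 A S y : y \in S ->
  alpha R e A S = cd R #|Nw e A y| * alpha R e A (S :\ y).
Proof. by move=> yS; rewrite /alpha (big_setD1 y yS). Qed.

End Alpha.

Theorem lemma14 (R : realFieldType) (V : finType) (e : rel V)
    (T : dtree V) (pu : seq bool) (Au : pasg V) (x : V)
    (tp tn : option (dtree V)) (Avp Avn : pasg V) (vp vn : dtree V)
    (S : {set V}) (y : V) :
  simple_graph e -> no_isolated e ->
  dtree_for e (@pempty V) T ->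
  node_at (@pempty V) T pu = Some (Au, DNode x tp tn) ->
  ~~ forced e Au x ->
  node_at (@pempty V) T (rcons pu true) = Some (Avp, vp) ->
  node_at (@pempty V) T (rcons pu false) = Some (Avn, vn) ->
  y \in S -> e x y ->
  let p : R := weight R e Au x true in
  p * alpha R e Avp S + (1 - p) * alpha R e Avn (S :\ y) <= alpha R e Au S.
Proof.
move=> [e_sym _] _ T_for u_at not_forced vp_at vn_at yS exy /=.
have [sol_u Aux _ _] := node_at_dtree_for T_for u_at.
rewrite (node_at_rcons u_at vp_at) (node_at_rcons u_at vn_at).
have eyx : e y x by rewrite e_sym.
have := proper_card (Nw_padd_proper true eyx Aux not_forced).
case Nu: #|Nw e Au y| => [//|d] Nvp_lt.
rewrite !(alpha_setD1 _ _ _ yS) Nu.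
apply: cd_mix_le; rewrite ?cd_ge0 ?alpha_ge0 ?alpha_padd_le //=.
  exact: weight_true_ge_half.
by rewrite cd_homo // -ltnS.
Qed.
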